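(* Let $\alpha>3/2$, $a(x)=|x|^{-\alpha}$ and $b(x)=\Delta\,a(x)$ for $x\in\mathbb{Z}_{\neq0}$, where $\Delta\in\mathbb{R}\setminus\{0,1,-1\}$. If $K:\mathbb{Z}_{\neq0}\to\mathbb{R}$ is an odd function satisfying $$K(u)a(v)-K(v)a(u)+K(u+v)\bigl(b(u)-b(v)\bigr)=0$$ for all $u,v\in\mathbb{Z}$ with $u,v,u+v\neq0$, then $K\equiv0$.
   Context: Equivalently: for the power-law XXZ chain $\hat H=\sum_{m<n}|m-n|^{-\alpha}\bigl(\hat S^x_m\hat S^x_n+\hat S^y_m\hat S^y_n+\Delta\hat S^z_m\hat S^z_n\bigr)$ with $\Delta\neq0,\pm1$, there is no nonzero conserved two-body operator of the form $\hat K=\sum_{n\in\mathbb{Z},\,r\neq0}K(r)(\hat S^x_n\hat S^y_{n+r}-\hat S^y_n\hat S^x_{n+r})$ with $K$ odd; the displayed functional equation is exactly the condition $[\hat H,\hat K]=0$. *)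

From Stdlib Require Import Reals ZArith.
Open Scope R_scope.

Definition pl_a (alpha : R) (x : Z) : R := Rpower (Rabs (IZR x)) (- alpha).

Definition pl_b (alpha Delta : R) (x : Z) : R := Delta * pl_a alpha x.

(* The equation at (u, v), (u + v, -v) and (u + v, -u), together with the
   oddness of K and the evenness of a, gives three linear relations between
   K u, K v and K (u + v).  Eliminating K v and K (u + v) leaves
   Δ (Δ² - 1) (a u - a v) (a (u+v) - a u) (a (u+v) - a v) K u = 0.  For
   u = x > 0 and v = x + 1 the three values of a are distinct because
   x ↦ x^(-α) is injective on positive integers, so K x = 0; oddness covers
   x < 0. *)
From Stdlib Require Import Reals ZArith Lra Lia.
Open Scope R_scope.

Lemma pl_a_opp (alpha : R) (m : Z) : pl_a alpha (- m) = pl_a alpha m.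
Proof. unfold pl_a. now rewrite opp_IZR, Rabs_Ropp. Qed.

Lemma pl_a_pos_inj (alpha : R) (m n : Z) :
  alpha <> 0 -> (0 < m)%Z -> (0 < n)%Z -> pl_a alpha m = pl_a alpha n -> m = n.
Proof.
  intros Halpha Hm Hn Heq. unfold pl_a, Rpower in Heq.
  apply exp_inv in Heq.
  assert (Pm : 0 < IZR m) by (apply IZR_lt; lia).
  assert (Pn : 0 < IZR n) by (apply IZR_lt; lia).
  rewrite !Rabs_right in Heq by lra.
  apply eq_IZR, ln_inv; auto.
  apply Rmult_eq_reg_l with (- alpha); lra.
Qed.

Lemma three_relations_elim (Ku Kv Kw au av aw D : R) :
  Ku * av - Kv * au + Kw * (D * au - D * av) = 0 ->
  Kw * av - (- Kv) * aw + Ku * (D * aw - D * av) = 0 ->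
  Kw * au - (- Ku) * aw + Kv * (D * aw - D * au) = 0 ->
  D * (D * D - 1) * (au - av) * (aw - au) * (aw - av) * Ku = 0.
Proof.
  intros E1 E2 E3.
  transitivity ((aw * au - av * D * (aw - au)) * (Ku * av - Kv * au + Kw * (D * au - D * av))
    + ((au * au + D * (au - av) * D * (aw - au))) * (Kw * av - (- Kv) * aw + Ku * (D * aw - D * av))
    + (- au * av - D * (au - av) * aw) * (Kw * au - (- Ku) * aw + Kv * (D * aw - D * au))).
  - ring.
  - rewrite E1, E2, E3; ring.
Qed.

Section FunctionalEquation.

Variables (alpha Delta : R) (K : Z -> R).

Hypothesis K_odd : forall x : Z, x <> 0%Z -> K (- x)%Z = - K x.

Hypothesis K_eqn : forall u v : Z, u <> 0%Z -> v <> 0%Z -> (u + v)%Z <> 0%Z ->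
  K u * pl_a alpha v - K v * pl_a alpha u
  + K (u + v)%Z * (pl_b alpha Delta u - pl_b alpha Delta v) = 0.

Lemma K_eqn_triple (u v : Z) :
  u <> 0%Z -> v <> 0%Z -> (u + v)%Z <> 0%Z ->
  Delta * (Delta * Delta - 1)
  * (pl_a alpha u - pl_a alpha v)
  * (pl_a alpha (u + v) - pl_a alpha u)
  * (pl_a alpha (u + v) - pl_a alpha v) * K u = 0.
Proof.
  intros Hu Hv Huv.
  pose proof (K_eqn u v Hu Hv Huv) as E1.
  pose proof (K_eqn (u + v) (- v) Huv ltac:(lia) ltac:(lia)) as E2.
  pose proof (K_eqn (u + v) (- u) Huv ltac:(lia) ltac:(lia)) as E3.
  replace (u + v + - v)%Z with u in E2 by lia.
  replace (u + v + - u)%Z with v in E3 by lia.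
  unfold pl_b in *.
  rewrite pl_a_opp, K_odd in E2 by exact Hv.
  rewrite pl_a_opp, K_odd in E3 by exact Hu.
  exact (three_relations_elim _ _ _ _ _ _ _ E1 E2 E3).
Qed.

Lemma K_pos_eq0 (x : Z) :
  alpha <> 0 -> Delta <> 0 -> Delta <> 1 -> Delta <> -1 -> (0 < x)%Z -> K x = 0.
Proof.
  intros Halpha HD0 HD1 HDm1 Hx.
  assert (Hinj : forall m n, (0 < m)%Z -> (0 < n)%Z -> m <> n ->
    pl_a alpha m - pl_a alpha n <> 0).
  { intros m n Hm Hn Hmn Heq. apply Hmn, (pl_a_pos_inj alpha); auto; lra. }
  assert (HD2 : Delta * Delta - 1 <> 0).
  { replace (Delta * Delta - 1) with ((Delta - 1) * (Delta + 1)) by ring.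
    apply Rmult_integral_contrapositive_currified; lra. }
  pose proof (K_eqn_triple x (x + 1) ltac:(lia) ltac:(lia) ltac:(lia)) as Htriple.
  repeat (apply Rmult_integral in Htriple as [Htriple | Htriple]); try exact Htriple.
  all: exfalso; revert Htriple; try (apply Hinj; lia); lra.
Qed.

End FunctionalEquation.

Theorem mainTheorem5 (alpha Delta : R) (K : Z -> R) :
  3 / 2 < alpha ->
  Delta <> 0 -> Delta <> 1 -> Delta <> -1 ->
  (forall x : Z, x <> 0%Z -> K (- x)%Z = - K x) ->
  (forall u v : Z, u <> 0%Z -> v <> 0%Z -> (u + v)%Z <> 0%Z ->
     K u * pl_a alpha v - K v * pl_a alpha u
     + K (u + v)%Z * (pl_b alpha Delta u - pl_b alpha Delta v) = 0) ->
  forall x : Z, x <> 0%Z -> K x = 0.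
Proof.
  intros Halpha HD0 HD1 HDm1 K_odd K_eqn x Hx.
  pose proof (K_pos_eq0 alpha Delta K K_odd K_eqn) as Hpos.
  destruct (Z.lt_trichotomy x 0) as [Hneg | [Hzero | Hgt]].
  - replace x with (- - x)%Z by lia.
    rewrite K_odd, Hpos by (lra || lia). ring.
  - contradiction.
  - apply Hpos; lra || lia.
Qed.
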